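(* Let $\mathcal J$ be an instance of the uniform a priori TRP on vertex set $\bigcup_{v\in X}S_v$ (with root $r$), where for each $v\in X$ the vertices of $S_v$ are co-located (pairwise distance $0$ and identical distances to all other vertices), and every vertex is independently active with probability $p$; let $\Pi$ denote this distribution of the active set. Let $\tau$ be a master tour, fix $z\in X$, and let $C_z^1,\dots,C_z^k$ be the minimal partition of $S_z$ such that the vertices of each $C_z^\ell$ appear consecutively in $\tau$. For two distinct parts $C_z^i$ and $C_z^j$, let $\tau_i$ be the tour obtained from $\tau$ by relocating the vertices of $C_z^j$ to immediately after $C_z^i$, and $\tau_j$ the tour obtained from $\tau$ by relocating the vertices of $C_z^i$ to immediately before $C_z^j$. Then $$\mathbb{E}_{A\sim\Pi}[\mathsf{LAT}^A_\tau]\ge\min\big(\mathbb{E}_{A\sim\Pi}[\mathsf{LAT}^A_{\tau_i}],\ \mathbb{E}_{A\sim\Pi}[\mathsf{LAT}^A_{\tau_j}]\big).$$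
   Context: A master tour is a tour from the root $r$ visiting all vertices. For an active set $A$, the master tour $\pi$ is shortcut to visit only $A$ in the same order starting from $r$; $\mathsf{LAT}^A_\pi(w)$ is the distance from $r$ to $w\in A$ along this shortcut tour, and $\mathsf{LAT}^A_\pi=\sum_{w\in A}\mathsf{LAT}^A_\pi(w)$. *)

From mathcomp Require Import all_boot all_order all_algebra.
Set Implicit Arguments. Unset Strict Implicit. Unset Printing Implicit Defensive.
Import Order.TTheory GRing.Theory Num.Theory.
Local Open Scope ring_scope.

Section TRP.
Variables (R : realFieldType) (V : finType) (d : V -> V -> R) (r : V).

Fixpoint lat_from (x : V) (acc : R) (s : seq V) : R :=
  match s with
  | [::] => 0
  | y :: s' => (acc + d x y) + lat_from y (acc + d x y) s'
  end.

Definition LAT (A : {set V}) (pi : seq V) : R :=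
  lat_from r 0 [seq x <- pi | x \in A].

Definition master_tour (pi : seq V) : Prop :=
  uniq pi /\ forall v, (v \in pi) = (v != r).

Definition ELAT (p : R) (pi : seq V) : R :=
  \sum_(A : {set V} | r \notin A)
     p ^+ #|A| * (1 - p) ^+ (#|V| - 1 - #|A|)%N * LAT A pi.

Variables (X : finType) (grp : V -> X).

Definition inS (z : X) (v : V) : bool := (v != r) && (grp v == z).

(* C is one of the parts of the minimal partition of S_z into blocks that
   are consecutive in pi, i.e. a maximal run of S_z-vertices in pi *)
Definition maximal_run (z : X) (pi C : seq V) : Prop :=
  exists a c, pi = a ++ C ++ c /\ C != [::] /\ all (inS z) C /\
    (if a is _ :: _ then ~~ inS z (last r a) else true) /\
    (if c is y :: _ then ~~ inS z y else true).

Definition move_after (pi Ci Cj : seq V) : seq V :=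
  let pi' := [seq x <- pi | x \notin Cj] in
  let k := (index (last r Ci) pi').+1 in
  take k pi' ++ Cj ++ drop k pi'.

Definition move_before (pi Ci Cj : seq V) : seq V :=
  let pi' := [seq x <- pi | x \notin Ci] in
  let k := index (head r Cj) pi' in
  take k pi' ++ Ci ++ drop k pi'.

End TRP.

From mathcomp Require Import all_boot all_order all_algebra.
From mathcomp Require Import ring lra zify.
Import Order.TTheory GRing.Theory Num.Theory.

Set Implicit Arguments. Unset Strict Implicit. Unset Printing Implicit Defensive.

(** Two distinct maximal runs [B1], [B2] of [S_z] split the tour as
    [P ++ B1 ++ M ++ B2 ++ Q], and the two moves produce [P ++ B ++ M ++ Q] and
    [P ++ M ++ B ++ Q] with [B] a permutation of [B1 ++ B2].  As [S_z] is a single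
    point, once the active vertices outside the runs are fixed, the three
    latencies only depend on the numbers [k1], [k2] of active vertices in [B1],
    [B2], and they differ by terms linear in [k1], [k2] plus detour costs paid
    when a block is nonempty.  Weighting the gain of the first move by [|B1|] and
    that of the second by [|B2|], the linear terms cancel in expectation
    ([E k = p |B|]), and the detour terms are nonpositive in expectation by the
    inequality [n1 q^n1 (1 - q^n2) <= n2 (1 - q^n1)] for [q = 1 - p].  So a convex
    combination of the two expected gains is nonpositive, and one of them is. *)

(** * Maximal runs and the two moves *)

Lemma cat_prefix (T : Type) (a b c e : seq T) :
  a ++ b = c ++ e -> size a <= size c -> exists2 t, c = a ++ t & b = t ++ e.
Proof.
elim: a c => [|x a IH] [|y c] //=.
- by move=> -> _; exists [::].
- by move=> -> _; exists (y :: c).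
- by case=> -> /IH{}IH /IH[t -> ->]; exists t.
Qed.

Lemma uniq_cat_notin (T : eqType) (s1 s2 : seq T) x :
  uniq (s1 ++ s2) -> x \in s2 -> x \notin s1.
Proof. by rewrite cat_uniq => /and3P[_ /hasPn h _] /h. Qed.

Section MaximalRuns.
Variables (V X : finType) (r : V) (grp : V -> X) (z : X).
Local Notation inS := (inS r grp z).

Lemma inS_root : inS r = false.
Proof. by rewrite /inS eqxx. Qed.

(* The boundary conditions of [maximal_run] hold trivially at the ends of the
   tour, since the default vertex [r] is never in [S_z]. *)
Lemma maximal_run_split tau C : maximal_run r grp z tau C ->
  exists a c, [/\ tau = a ++ C ++ c, C != [::], all inS C,
                  ~~ inS (last r a) & ~~ inS (head r c)].
Proof.
case=> a [c [E [nC [aC [la hc]]]]]; exists a, c; split=> //.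
- by case: a la {E}; rewrite // inS_root.
- by case: c hc {E}; rewrite // inS_root.
Qed.

Lemma maximal_run_same_start C1 C2 c1 c2 :
  C1 ++ c1 = C2 ++ c2 -> all inS C1 -> all inS C2 ->
  ~~ inS (head r c1) -> ~~ inS (head r c2) -> C1 = C2.
Proof.
wlog le12 : C1 C2 c1 c2 / size C1 <= size C2.
  move=> W E a1 a2 h1 h2; case: (leqP (size C1) (size C2)) => le.
    exact: W le E a1 a2 h1 h2.
  exact/esym/(W _ _ _ _ (ltnW le) (esym E)).
move=> E _ a2 h1 _; have [[|y t] EC2 Ec1] := cat_prefix E le12; first by rewrite EC2 cats0.
by move: a2 h1; rewrite EC2 Ec1 all_cat /= => /and3P[_ ->].
Qed.

Lemma maximal_run_before a1 C1 c1 a2 C2 c2 :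
  a1 ++ C1 ++ c1 = a2 ++ C2 ++ c2 -> size a1 <= size a2 -> C1 != C2 ->
  all inS C1 -> all inS C2 ->
  ~~ inS (last r a2) -> ~~ inS (head r c1) -> ~~ inS (head r c2) ->
  exists M, a2 = a1 ++ C1 ++ M.
Proof.
move=> E le12 neq all1 all2 l2 h1 h2; have [[|y t] Ea2 Et] := cat_prefix E le12.
  by rewrite (@maximal_run_same_start _ C2 _ _ Et all1 all2 h1 h2) eqxx in neq.
case: (leqP (size C1) (size (y :: t))) => leC.
  by have [M EM _] := cat_prefix Et leC; exists M; rewrite Ea2 EM.
have [u EC1 _] := cat_prefix (esym Et) (ltnW leC).
move: l2; rewrite Ea2 last_cat /=.
by move: all1; rewrite EC1 all_cat => /andP[/allP-> //]; rewrite mem_last.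
Qed.

Lemma maximal_runs_ordered tau C1 C2 :
  maximal_run r grp z tau C1 -> maximal_run r grp z tau C2 -> C1 != C2 ->
  exists P M Q, tau = P ++ C1 ++ M ++ C2 ++ Q \/ tau = P ++ C2 ++ M ++ C1 ++ Q.
Proof.
move=> /maximal_run_split[a1 [c1 [E1 _ all1 l1 h1]]].
move=> /maximal_run_split[a2 [c2 [E2 _ all2 l2 h2]]] neq.
have E : a1 ++ C1 ++ c1 = a2 ++ C2 ++ c2 by rewrite -E1 -E2.
case: (leqP (size a1) (size a2)) => le.
  have [M EM] := maximal_run_before E le neq all1 all2 l2 h1 h2.
  by exists a1, M, c2; left; rewrite E2 EM -!catA.
rewrite eq_sym in neq.
have [M EM] := maximal_run_before (esym E) (ltnW le) neq all2 all1 l1 h2 h1.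
by exists a2, M, c1; right; rewrite E1 EM -!catA.
Qed.

End MaximalRuns.

Section Moves.
Variables (V : finType) (r : V).

Lemma filter_notin_cat (s1 C s2 : seq V) :
  uniq (s1 ++ C ++ s2) -> [seq x <- s1 ++ C ++ s2 | x \notin C] = s1 ++ s2.
Proof.
move=> U; rewrite !filter_cat (@eq_in_filter _ _ pred0 C) ?filter_pred0; last first.
  by move=> x /= ->.
congr (_ ++ _); apply/all_filterP/allP => x xs.
- by apply: contraL xs => xC; apply: uniq_cat_notin U _; rewrite mem_cat xC.
- by move: U; rewrite catA => /uniq_cat_notin/(_ xs); rewrite mem_cat negb_or => /andP[].
Qed.

Lemma move_afterE tau Ci Cj U W : uniq tau ->
  [seq x <- tau | x \notin Cj] = U ++ Ci ++ W -> Ci != [::] ->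
  move_after r tau Ci Cj = U ++ Ci ++ Cj ++ W.
Proof.
rewrite /move_after => /(filter_uniq (fun x => x \notin Cj)) + E.
rewrite E catA cat_uniq => /andP[UC _]; case: Ci UC {E} => [//|c C] UC _ /=.
have cC : last c C \in c :: C by exact: mem_last.
have idx : index (last c C) (U ++ c :: C) = size U + size C.
  rewrite index_cat (negPf (uniq_cat_notin UC cC)) index_last //.
  by move: UC; rewrite cat_uniq => /and3P[].
rewrite index_cat mem_cat cC orbT idx -addnS -[(size C).+1]/(size (c :: C)) -size_cat.
by rewrite take_size_cat // drop_size_cat // -catA.
Qed.

Lemma move_beforeE tau Ci Cj U W : uniq tau ->
  [seq x <- tau | x \notin Ci] = U ++ Cj ++ W -> Cj != [::] ->
  move_before r tau Ci Cj = U ++ Ci ++ Cj ++ W.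
Proof.
rewrite /move_before => /(filter_uniq (fun x => x \notin Ci)) + E.
rewrite E; case: Cj {E} => [//|c C] /uniq_cat_notin cU _ /=.
rewrite index_cat (negPf (cU c _)) ?mem_head //= eqxx addn0.
by rewrite take_size_cat // drop_size_cat.
Qed.

Lemma moves_of_ordered_runs P Ci M Cj Q :
  uniq (P ++ Ci ++ M ++ Cj ++ Q) -> Ci != [::] -> Cj != [::] ->
  move_after r (P ++ Ci ++ M ++ Cj ++ Q) Ci Cj = P ++ (Ci ++ Cj) ++ M ++ Q /\
  move_before r (P ++ Ci ++ M ++ Cj ++ Q) Ci Cj = P ++ M ++ (Ci ++ Cj) ++ Q.
Proof.
move=> Ut nCi nCj; split; rewrite -catA.
- rewrite (move_afterE (U := P) (W := M ++ Q) Ut) //.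
  by move: (Ut); rewrite 2!catA => /filter_notin_cat; rewrite -!catA.
- rewrite (move_beforeE (U := P ++ M) (W := Q) Ut) -?catA //.
  exact: filter_notin_cat.
Qed.

Lemma moves_of_reversed_runs P Ci M Cj Q :
  uniq (P ++ Cj ++ M ++ Ci ++ Q) -> Ci != [::] -> Cj != [::] ->
  move_after r (P ++ Cj ++ M ++ Ci ++ Q) Ci Cj = P ++ M ++ (Ci ++ Cj) ++ Q /\
  move_before r (P ++ Cj ++ M ++ Ci ++ Q) Ci Cj = P ++ (Ci ++ Cj) ++ M ++ Q.
Proof.
move=> Ut nCi nCj; split; rewrite -catA.
- rewrite (move_afterE (U := P ++ M) (W := Q) Ut) -?catA //.
  exact: filter_notin_cat.
- rewrite (move_beforeE (U := P) (W := M ++ Q) Ut) //.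
  by move: (Ut); rewrite 2!catA => /filter_notin_cat; rewrite -!catA.
Qed.

End Moves.

(** * Latency of a path *)

Local Open Scope ring_scope.

Lemma natr_addn_gt0 (R : realFieldType) (k1 k2 : nat) :
  (0 < k1 + k2)%:R = 1 - (1 - (0 < k1)%:R) * (1 - (0 < k2)%:R) :> R.
Proof. by case: k1 k2 => [|k1] [|k2]; rewrite ?addnS /=; ring. Qed.

(* The weighted gain of the two moves on blocks of [k1] and [k2] copies of one
   point, up to a nonpositive term: [D] is the difference of the arrival times at
   the two insertion gaps, [da] and [db] the total delays caused by a nonempty
   block at the first and at the second gap. *)
Definition block_bound (R : realFieldType) (D da db n1 n2 : R) (k1 k2 : nat) : R :=
  D * (n2 * k1%:R - n1 * k2%:R)
  + da * (n1 * ((1 - (0 < k1)%:R) * (0 < k2)%:R) - n2 * (0 < k1)%:R)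
  + db * (n2 * ((0 < k1)%:R * (1 - (0 < k2)%:R)) - n1 * (0 < k2)%:R).

Section Latency.
Variables (R : realFieldType) (V : finType) (d : V -> V -> R).

Fixpoint path_length (x : V) (s : seq V) : R :=
  if s is y :: s' then d x y + path_length y s' else 0.

Definition lat (x : V) (s : seq V) : R := lat_from d x 0 s.

Lemma lat_fromE x acc s : lat_from d x acc s = (size s)%:R * acc + lat x s.
Proof.
rewrite /lat; elim: s x acc => [|y s IH] x acc /=; first by rewrite mul0r addr0.
by rewrite IH [lat_from _ _ (0 + _) _]IH add0r -addn1 natrD; ring.
Qed.

Lemma lat_from_map (g : V -> V) x acc s : (forall u w, d (g u) (g w) = d u w) ->
  lat_from d (g x) acc (map g s) = lat_from d x acc s.
Proof. by move=> dg; elim: s x acc => [|y s IH] x acc //=; rewrite dg IH. Qed.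

Lemma path_length_cat x s1 s2 :
  path_length x (s1 ++ s2) = path_length x s1 + path_length (last x s1) s2.
Proof. by elim: s1 x => [|y s IH] x /=; rewrite ?add0r // IH addrA. Qed.

Lemma lat_cons x y s : lat x (y :: s) = (size s).+1%:R * d x y + lat y s.
Proof. by rewrite {1}/lat /= lat_fromE !add0r mulrSr; ring. Qed.

Lemma lat_cat x s1 s2 :
  lat x (s1 ++ s2) = lat x s1 + (size s2)%:R * path_length x s1 + lat (last x s1) s2.
Proof.
elim: s1 x => [|y s IH] x /=; first by rewrite /lat mulr0 !add0r.
by rewrite !lat_cons IH size_cat -addSn natrD; ring.
Qed.

Definition detour (u x : V) (s : seq V) : R :=
  if s is y :: _ then d u x + d x y - d u y else d u x.

Hypothesis d_refl : forall x, d x x = 0.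

Lemma path_length_insert y s1 k x s2 :
  path_length y (s1 ++ nseq k x ++ s2) =
  path_length y (s1 ++ s2) + (0 < k)%:R * detour (last y s1) x s2.
Proof.
rewrite (path_length_cat y s1 s2) path_length_cat.
case: k => [|k]; first by rewrite /= mul0r addr0.
have -> : path_length (last y s1) (nseq k.+1 x ++ s2) = d (last y s1) x + path_length x s2.
  by rewrite /=; congr (_ + _); elim: k => //= k ->; rewrite d_refl add0r.
by case: s2 => [|z s2] /=; ring.
Qed.

Lemma lat_insert y s1 k x s2 :
  lat y (s1 ++ nseq k x ++ s2) = lat y (s1 ++ s2) +
    k%:R * (path_length y s1 + d (last y s1) x) +
    (0 < k)%:R * (size s2)%:R * detour (last y s1) x s2.
Proof.
rewrite (lat_cat y s1 s2) lat_cat size_cat size_nseq natrD.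
case: k => [|k]; first by rewrite /= !mul0r !addr0 add0r.
have -> : lat (last y s1) (nseq k.+1 x ++ s2) =
    (k.+1 + size s2)%:R * d (last y s1) x + lat x s2.
  rewrite /= lat_cons size_cat size_nseq; congr (_ + _).
  by elim: k => //= k IH; rewrite lat_cons IH d_refl mulr0 add0r.
by case: s2 => [|z s2]; rewrite /= ?lat_cons natrD /=; ring.
Qed.

Hypothesis d_ge0 : forall x y, 0 <= d x y.
Hypothesis d_tri : forall x y w, d x w <= d x y + d y w.

Lemma detour_ge0 u x s : 0 <= detour u x s.
Proof. by case: s => [|y s] /=; rewrite ?subr_ge0. Qed.

Lemma lat_merge_blocks_gain y P M Q x :
  exists D da db, [/\ 0 <= da, 0 <= db & forall (n1 n2 : R) k1 k2, 0 <= n1 -> 0 <= n2 ->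
    let L := lat y (P ++ nseq k1 x ++ M ++ nseq k2 x ++ Q) in
    n1 * (lat y (P ++ nseq (k1 + k2) x ++ M ++ Q) - L) +
    n2 * (lat y (P ++ M ++ nseq (k1 + k2) x ++ Q) - L) <= block_bound D da db n1 n2 k1 k2].
Proof.
case: M => [|m M].
  exists 0, 0, 0; split=> // n1 n2 k1 k2 _ _ /=.
  by rewrite nseqD -catA subrr /block_bound !mul0r !mulr0 !addr0.
set u := last y P; set v := last m M.
set a1 := path_length y P + d u x; set a2 := path_length y (P ++ m :: M) + d v x.
set da := detour u x (m :: M ++ Q); set db := detour v x Q.
set nMQ : R := (size (m :: M ++ Q))%:R; set nQ : R := (size Q)%:R.
have da_ge0 : 0 <= da by exact: detour_ge0.
exists (a2 - a1), (nMQ * da), (nQ * db).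
split; try by rewrite mulr_ge0 ?ler0n ?detour_ge0.
move=> n1 n2 k1 k2 n1_ge0 n2_ge0 /=.
have La k : lat y (P ++ nseq k x ++ m :: M ++ Q) =
    lat y (P ++ m :: M ++ Q) + k%:R * a1 + (0 < k)%:R * nMQ * da.
  exact: lat_insert.
have Lb k : lat y (P ++ m :: M ++ nseq k x ++ Q) =
    lat y (P ++ m :: M ++ Q) + k%:R * a2 + (0 < k)%:R * nQ * db.
  by rewrite -[m :: _]/((m :: M) ++ _) catA lat_insert last_cat -catA.
have Lt : lat y (P ++ nseq k1 x ++ m :: M ++ nseq k2 x ++ Q) =
    lat y (P ++ nseq k1 x ++ m :: M ++ Q) +
    k2%:R * (path_length y (P ++ m :: M) + (0 < k1)%:R * da + d v x) +
    (0 < k2)%:R * nQ * db.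
  rewrite -[m :: _]/((m :: M) ++ _) (catA (nseq k1 x)) catA lat_insert -!catA.
  by rewrite !last_cat path_length_insert.
rewrite Lt !La Lb natr_addn_gt0 natrD -subr_ge0.
(* The dropped term is the delay of the second block by a nonempty first block. *)
rewrite [X in _ <= X](_ : _ = (n1 + n2) * ((0 < k1)%:R * (k2%:R * da))).
  by rewrite mulr_ge0 ?addr_ge0 // mulr_ge0 ?ler0n // mulr_ge0 ?ler0n.
by rewrite /block_bound /a2; ring.
Qed.

End Latency.

(** * Random subsets *)

Lemma set_ind (T : finType) (P : {set T} -> Prop) :
  P set0 -> (forall x (S : {set T}), x \notin S -> P S -> P (x |: S)) -> forall S, P S.
Proof.
move=> P0 PU S; move: {2}#|S| (erefl #|S|) => n; elim: n S => [|n IH] S cardS.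
  by rewrite (cards0_eq cardS).
have [x xS] : exists x, x \in S by apply/card_gt0P; rewrite cardS.
rewrite -(setD1K xS); apply: PU; first by rewrite !inE eqxx.
by apply: IH; move: cardS; rewrite (cardsD1 x) xS; case.
Qed.

Lemma setIU_subsetl (T : finType) (S1 S2 A1 A2 : {set T}) :
  [disjoint S1 & S2] -> A1 \subset S1 -> A2 \subset S2 -> (A1 :|: A2) :&: S1 = A1.
Proof.
move=> S12 s1 s2; rewrite setIUl (setIidPl s1) (disjoint_setI0 (disjointWl s2 _)) ?setU0 //.
by rewrite disjoint_sym.
Qed.

Lemma setIU_subsetr (T : finType) (S1 S2 A1 A2 : {set T}) :
  [disjoint S1 & S2] -> A1 \subset S1 -> A2 \subset S2 -> (A1 :|: A2) :&: S2 = A2.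
Proof. by rewrite disjoint_sym setUC => S21 s1 s2; apply: setIU_subsetl S21 s2 s1. Qed.

Lemma sum_subsets_setU (R : nmodType) (T : finType) (S1 S2 : {set T}) (F : {set T} -> R) :
  [disjoint S1 & S2] ->
  \sum_(A : {set T} | A \subset S1 :|: S2) F A =
  \sum_(A1 : {set T} | A1 \subset S1) \sum_(A2 : {set T} | A2 \subset S2) F (A1 :|: A2).
Proof.
move=> S12; rewrite pair_big_dep /=.
rewrite (reindex_onto (fun A => (A.1 :|: A.2)) (fun A => (A :&: S1, A :&: S2))) /=; last first.
  by move=> A sA; rewrite -setIUr; apply/setIidPl.
apply: eq_bigl => -[A1 A2] /=; apply/andP/andP => [[_ /eqP[<- <-]] | [s1 s2]].
  by rewrite !subsetIr.
by rewrite setUSS // (setIU_subsetl S12 s1 s2) (setIU_subsetr S12 s1 s2).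
Qed.

Section RandomSubset.
Variables (R : realFieldType) (T : finType) (p : R).
Implicit Types (S A : {set T}) (F G : {set T} -> R).

Definition subset_weight (S A : {set T}) : R := p ^+ #|A| * (1 - p) ^+ (#|S| - #|A|).

Definition expect (S : {set T}) (F : {set T} -> R) : R :=
  \sum_(A : {set T} | A \subset S) subset_weight S A * F A.

Lemma eq_expect S F G : (forall A, A \subset S -> F A = G A) -> expect S F = expect S G.
Proof. by move=> FG; apply: eq_bigr => A /FG ->. Qed.

Lemma expectD S F G : expect S (fun A => F A + G A) = expect S F + expect S G.
Proof. by rewrite -big_split; apply: eq_bigr => A _; rewrite mulrDr. Qed.

Lemma expectB S F G : expect S (fun A => F A - G A) = expect S F - expect S G.
Proof. by rewrite -sumrB; apply: eq_bigr => A _; rewrite mulrBr. Qed.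

Lemma expectZ S c F : expect S (fun A => c * F A) = c * expect S F.
Proof. by rewrite mulr_sumr; apply: eq_bigr => A _; rewrite mulrCA. Qed.

Lemma expect_set0 F : expect set0 F = F set0.
Proof.
rewrite /expect (eq_bigl (pred1 set0)) => [|A]; last by rewrite subset0.
by rewrite big_pred1_eq /subset_weight cards0 subnn !expr0 !mul1r.
Qed.

Lemma subset_weight_setU S1 S2 A1 A2 :
  [disjoint S1 & S2] -> A1 \subset S1 -> A2 \subset S2 ->
  subset_weight (S1 :|: S2) (A1 :|: A2) = subset_weight S1 A1 * subset_weight S2 A2.
Proof.
move=> S12 s1 s2.
have cardU (B1 B2 : {set T}) : [disjoint B1 & B2] -> #|B1 :|: B2| = (#|B1| + #|B2|)%N.
  by move=> B12; apply/eqP; rewrite (leq_card_setU B1 B2).2.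
rewrite /subset_weight !cardU ?(disjointW s1 s2) //.
have := subset_leq_card s1; have := subset_leq_card s2 => le2 le1.
have -> : (#|S1| + #|S2| - (#|A1| + #|A2|) = (#|S1| - #|A1|) + (#|S2| - #|A2|))%N by lia.
by rewrite !exprD; ring.
Qed.

Lemma expect_splitU S1 S2 F : [disjoint S1 & S2] ->
  expect (S1 :|: S2) F = expect S1 (fun A1 => expect S2 (fun A2 => F (A1 :|: A2))).
Proof.
move=> S12; rewrite /expect sum_subsets_setU //; apply: eq_bigr => A1 s1.
by rewrite mulr_sumr; apply: eq_bigr => A2 s2; rewrite subset_weight_setU // mulrA.
Qed.

Lemma expect_setU1 x S F : x \notin S ->
  expect (x |: S) F = (1 - p) * expect S F + p * expect S (fun A => F (x |: A)).
Proof.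
move=> xS; rewrite expect_splitU ?disjoints1 // /expect.
rewrite (eq_bigl (mem (powerset [set x]))) => [|A]; last by rewrite inE powersetE.
rewrite powerset1 big_setU1 ?big_set1 /=; last first.
  by rewrite inE eq_sym; apply/eqP => /setP/(_ x); rewrite !inE eqxx.
rewrite /subset_weight cards0 cards1 subnn subn0 !expr0 expr1 mul1r mulr1.
by under eq_bigr do rewrite set0U.
Qed.

Lemma expect1 S : expect S (fun=> 1) = 1.
Proof.
elim/set_ind: S => [|x S xS IH]; first by rewrite expect_set0.
by rewrite expect_setU1 // IH; ring.
Qed.

Lemma expect_card S : expect S (fun A => #|A|%:R) = p * #|S|%:R.
Proof.
elim/set_ind: S => [|x S xS IH]; first by rewrite expect_set0 cards0 mulr0.
rewrite expect_setU1 // IH (@eq_expect _ _ (fun A => #|A|%:R + 1)); last first.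
  by move=> A sA; rewrite cardsU1 (contra (subsetP sA x) xS) add1n mulrS addrC.
by rewrite expectD expect1 IH cardsU1 xS add1n mulrS; ring.
Qed.

Lemma expect_card_gt0 S : expect S (fun A => (0 < #|A|)%:R) = 1 - (1 - p) ^+ #|S|.
Proof.
elim/set_ind: S => [|x S xS IH]; first by rewrite expect_set0 cards0 subrr.
rewrite expect_setU1 // IH (@eq_expect _ _ (fun=> 1)) ?expect1; last first.
  by move=> A sA; rewrite cardsU1 (contra (subsetP sA x) xS) add1n.
by rewrite cardsU1 xS exprS; ring.
Qed.

Lemma expect_indep S1 S2 F G : [disjoint S1 & S2] ->
  expect (S1 :|: S2) (fun A => F (A :&: S1) * G (A :&: S2)) = expect S1 F * expect S2 G.
Proof.
move=> S12; rewrite expect_splitU // mulrC -expectZ; apply: eq_expect => A1 s1.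
rewrite mulrC -expectZ; apply: eq_expect => A2 s2.
by rewrite (setIU_subsetl S12 s1 s2) (setIU_subsetr S12 s1 s2).
Qed.

Lemma expect_restrictl S1 S2 F : [disjoint S1 & S2] ->
  expect (S1 :|: S2) (fun A => F (A :&: S1)) = expect S1 F.
Proof.
move=> S12; rewrite -[RHS]mulr1 -(expect1 S2) -expect_indep //.
by apply: eq_expect => A _; rewrite mulr1.
Qed.

Lemma expect_restrictr S1 S2 F : [disjoint S1 & S2] ->
  expect (S1 :|: S2) (fun A => F (A :&: S2)) = expect S2 F.
Proof. by rewrite setUC disjoint_sym; apply: expect_restrictl. Qed.

Hypotheses (p_ge0 : 0 <= p) (p_le1 : p <= 1).

Lemma subset_weight_ge0 S A : 0 <= subset_weight S A.
Proof. by rewrite mulr_ge0 ?exprn_ge0 ?subr_ge0. Qed.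

Lemma ler_expect S F G : (forall A, A \subset S -> F A <= G A) ->
  expect S F <= expect S G.
Proof.
by move=> FG; apply: ler_sum => A sA; apply: ler_wpM2l; [exact: subset_weight_ge0 | exact: FG].
Qed.

Lemma expect_splitU_le0 S0 S F : [disjoint S0 & S] ->
  (forall A0, A0 \subset S0 -> expect S (fun A => F (A0 :|: A)) <= 0) ->
  expect (S0 :|: S) F <= 0.
Proof.
move=> S0S F_le0; rewrite expect_splitU //; apply: le_trans (ler_expect (G := fun=> 0) F_le0) _.
by rewrite /expect big1 // => A _; rewrite mulr0.
Qed.

End RandomSubset.

Lemma natr_exp_subr_le (R : realFieldType) (s : R) (n1 n2 : nat) : 0 <= s -> s <= 1 ->
  n1%:R * s ^+ n1 * (1 - s ^+ n2) <= n2%:R * (1 - s ^+ n1).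
Proof.
move=> s_ge0 s_le1.
have geo n : 1 - s ^+ n = (1 - s) * \sum_(i < n) s ^+ i.
  by rewrite -opprB subrX1 -mulNr opprB.
have geo_ge n : n%:R * s ^+ n <= \sum_(i < n) s ^+ i.
  rewrite mulr_natl -[n in _ *+ n]card_ord -sumr_const.
  by apply: ler_sum => i _; apply: ler_wiXn2l => //; exact: ltnW.
have geo_le n : \sum_(i < n) s ^+ i <= n%:R.
  rewrite -[n in n%:R]card_ord -sumr_const.
  by apply: ler_sum => i _; exact: exprn_ile1.
rewrite !geo mulrCA [n2%:R * _]mulrCA [n2%:R * _]mulrC ler_wpM2l ?subr_ge0 //.
by apply: ler_pM; rewrite ?mulr_ge0 ?exprn_ge0 ?sumr_ge0 // => i _; rewrite exprn_ge0.
Qed.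


Lemma expect_block_bound_le0 (R : realFieldType) (T : finType) (p : R) (S1 S2 : {set T})
    (D da db : R) :
  0 <= p -> p <= 1 -> [disjoint S1 & S2] -> 0 <= da -> 0 <= db ->
  expect p (S1 :|: S2) (fun A =>
    block_bound D da db #|S1|%:R #|S2|%:R #|A :&: S1| #|A :&: S2|) <= 0.
Proof.
move=> p_ge0 p_le1 S12 da_ge0 db_ge0.
set n1 : R := #|S1|%:R; set n2 : R := #|S2|%:R.
set s1 := (1 - p) ^+ #|S1|; set s2 := (1 - p) ^+ #|S2|.
have E_empty (S : {set T}) : expect p S (fun A => 1 - (0 < #|A|)%:R) = (1 - p) ^+ #|S|.
  by rewrite expectB expect1 expect_card_gt0 opprB addrC subrK.
have Ek1 : expect p (S1 :|: S2) (fun A => #|A :&: S1|%:R) = p * n1.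
  by rewrite (expect_restrictl p (fun A => #|A|%:R)) // expect_card.
have Ek2 : expect p (S1 :|: S2) (fun A => #|A :&: S2|%:R) = p * n2.
  by rewrite (expect_restrictr p (fun A => #|A|%:R)) // expect_card.
have Eb1 : expect p (S1 :|: S2) (fun A => (0 < #|A :&: S1|)%:R) = 1 - s1.
  by rewrite (expect_restrictl p (fun A => (0 < #|A|)%:R)) // expect_card_gt0.
have Eb2 : expect p (S1 :|: S2) (fun A => (0 < #|A :&: S2|)%:R) = 1 - s2.
  by rewrite (expect_restrictr p (fun A => (0 < #|A|)%:R)) // expect_card_gt0.
have E12 : expect p (S1 :|: S2)
    (fun A => (1 - (0 < #|A :&: S1|)%:R) * (0 < #|A :&: S2|)%:R) = s1 * (1 - s2).
  by rewrite (expect_indep p (fun A => 1 - (0 < #|A|)%:R) (fun A => (0 < #|A|)%:R)) //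
    E_empty expect_card_gt0.
have E21 : expect p (S1 :|: S2)
    (fun A => (0 < #|A :&: S1|)%:R * (1 - (0 < #|A :&: S2|)%:R)) = (1 - s1) * s2.
  by rewrite (expect_indep p (fun A => (0 < #|A|)%:R) (fun A => 1 - (0 < #|A|)%:R)) //
    E_empty expect_card_gt0.
rewrite /block_bound !expectD !expectZ !expectB !expectZ Ek1 Ek2 Eb1 Eb2 E12 E21.
have q_ge0 : 0 <= 1 - p by rewrite subr_ge0.
have q_le1 : 1 - p <= 1 by rewrite lerBlDr lerDl.
have key1 := natr_exp_subr_le #|S1| #|S2| q_ge0 q_le1.
have key2 := natr_exp_subr_le #|S2| #|S1| q_ge0 q_le1.
rewrite -/s1 -/s2 -/n1 -/n2 in key1 key2.
nra.
Qed.

Lemma ge_min_of_weighted (R : realDomainType) (a b e n1 n2 : R) : 0 < n1 -> 0 < n2 ->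
  n1 * (a - e) + n2 * (b - e) <= 0 -> Num.min a b <= e.
Proof. by move=> n1_gt0 n2_gt0 H; rewrite ge_min; case: (leP a e) => //= ?; nra. Qed.

Lemma count_mem_uniq (T : finType) (s : seq T) (A : {set T}) :
  uniq s -> count (fun x => x \in A) s = #|A :&: [set x in s]|.
Proof.
move=> us; rewrite -size_filter -(card_uniqP (filter_uniq _ us)).
by apply: eq_card => x; rewrite mem_filter !inE.
Qed.

Lemma ELAT_expect (R : realFieldType) (V : finType) (d : V -> V -> R) r p s :
  ELAT d r p s = expect p [set~ r] (fun A => LAT d r A s).
Proof.
apply: eq_big => [A | A _]; first by rewrite subsetC sub1set inE.
by rewrite /subset_weight cardsC1 subn1.
Qed.

Section Collapse.
Variables (R : realFieldType) (V X : finType) (d : V -> V -> R) (r : V) (grp : V -> X) (z : X).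
Local Notation inS := (inS r grp z).
Hypothesis d_refl : forall x, d x x = 0.
Hypothesis d_sym : forall x y, d x y = d y x.
Hypothesis coloc : forall u w, u != r -> w != r -> grp u = grp w ->
  d u w = 0 /\ (forall y, d u y = d w y).
Variables (x0 : V) (x0S : inS x0).

(* All of [S_z] sits at one point, so it may be replaced by its representative [x0]. *)
Definition collapse (u : V) : V := if inS u then x0 else u.

Lemma collapse_dist u w : d (collapse u) (collapse w) = d u w.
Proof.
have inS_coloc v v' : inS v -> inS v' -> d v v' = 0 /\ (forall y, d v y = d v' y).
  by case/andP=> vr /eqP gv /andP[vr' /eqP gv']; apply: coloc; rewrite ?gv ?gv'.
rewrite /collapse; case: ifP => uS; case: ifP => wS //.
- by rewrite d_refl; case: (inS_coloc u w uS wS).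
- by case: (inS_coloc x0 u x0S uS).
- by rewrite d_sym; case: (inS_coloc x0 w x0S wS) => _ ->; rewrite d_sym.
Qed.

Lemma LAT_collapse A s : LAT d r A s = lat d r (map collapse [seq x <- s | x \in A]).
Proof.
have collapse_r : collapse r = r by rewrite /collapse inS_root.
by rewrite /LAT /lat -{2}collapse_r lat_from_map //; exact: collapse_dist.
Qed.

Lemma collapse_run (a : pred V) s : all inS s -> map collapse (filter a s) = nseq (count a s) x0.
Proof.
by elim: s => [|y s IH] //= /andP[yS /IH{}IH]; case: (a y); rewrite /= IH // /collapse yS.
Qed.

End Collapse.

(** * Merging two runs *)

Section MergeRuns.
Variables (R : realFieldType) (V X : finType) (d : V -> V -> R) (r : V) (grp : V -> X)
  (z : X) (p : R).
Local Notation inS := (inS r grp z).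
Hypothesis d_refl : forall x, d x x = 0.
Hypothesis d_sym : forall x y, d x y = d y x.
Hypothesis d_ge0 : forall x y, 0 <= d x y.
Hypothesis d_tri : forall x y w, d x w <= d x y + d y w.
Hypothesis coloc : forall u w, u != r -> w != r -> grp u = grp w ->
  d u w = 0 /\ (forall y, d u y = d w y).
Hypotheses (p_ge0 : 0 <= p) (p_le1 : p <= 1).

Variables (P B1 M B2 Q B : seq V).
Hypothesis tau_uniq : uniq (P ++ B1 ++ M ++ B2 ++ Q).
Hypotheses (B1_neq0 : B1 != [::]) (B2_neq0 : B2 != [::]).
Hypotheses (B1S : all inS B1) (B2S : all inS B2) (permB : perm_eq B (B1 ++ B2)).
Let S1 := [set x in B1].
Let S2 := [set x in B2].

Lemma runs_uniq_disjoint :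
  [/\ uniq B1, uniq B2, [disjoint S1 & S2] & {in P ++ M ++ Q, forall x, x \notin B1 ++ B2}].
Proof.
have : uniq ((B1 ++ B2) ++ P ++ M ++ Q).
  rewrite (perm_uniq (s2 := P ++ B1 ++ M ++ B2 ++ Q)) //.
  by apply/permP => a; rewrite !count_cat; lia.
rewrite cat_uniq => /and3P[+ /hasPn outB _]; rewrite cat_uniq => /and3P[uB1 /hasPn B12 uB2].
split=> //; rewrite disjoint_subset; apply/subsetP => x; rewrite !inE => xB1.
by apply/negP => /B12/negP.
Qed.

Lemma LAT_merge_gain_bound (A0 : {set V}) : [disjoint A0 & S1 :|: S2] ->
  exists D da db : R, [/\ 0 <= da, 0 <= db & forall A : {set V}, A \subset S1 :|: S2 ->
    let L := LAT d r (A0 :|: A) (P ++ B1 ++ M ++ B2 ++ Q) in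
    #|S1|%:R * (LAT d r (A0 :|: A) (P ++ B ++ M ++ Q) - L) +
    #|S2|%:R * (LAT d r (A0 :|: A) (P ++ M ++ B ++ Q) - L)
    <= block_bound D da db #|S1|%:R #|S2|%:R #|A :&: S1| #|A :&: S2|].
Proof.
move=> A0_12; have [uB1 uB2 _ outB] := runs_uniq_disjoint.
have x0S : inS (head r B1) by case: (B1) B1_neq0 B1S => [//|x s] _ /andP[].
set x0 := head r B1; set c := collapse r grp z x0.
have [D [da [db [da_ge0 db_ge0 gain]]]] := lat_merge_blocks_gain d_refl d_ge0 d_tri r
  (map c [seq x <- P | x \in A0]) (map c [seq x <- M | x \in A0])
  (map c [seq x <- Q | x \in A0]) x0.
exists D, da, db; split=> // A sA /=.
have outE s : {subset s <= P ++ M ++ Q} ->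
    [seq x <- s | x \in A0 :|: A] = [seq x <- s | x \in A0].
  move=> sPMQ; apply: eq_in_filter => x /sPMQ/outB xB; rewrite inE.
  by case: (boolP (x \in A)) => [/(subsetP sA)|]; rewrite ?orbF // !inE -mem_cat (negPf xB).
have countE s : {subset s <= B1 ++ B2} ->
    count (fun x => x \in A0 :|: A) s = count (fun x => x \in A) s.
  move=> sB; apply: eq_in_count => x /sB xB; rewrite inE (disjointFl A0_12) //.
  by rewrite !inE -mem_cat.
have countB : count (fun x => x \in A) B = (#|A :&: S1| + #|A :&: S2|)%N.
  by rewrite (permP permB) count_cat !count_mem_uniq.
have BS : all inS B by rewrite (perm_all _ permB) all_cat B1S.
rewrite !(LAT_collapse d_refl d_sym coloc x0S) !filter_cat !map_cat.
rewrite !(collapse_run x0 _ B1S) !(collapse_run x0 _ B2S) !(collapse_run x0 _ BS).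
rewrite (countE B1) ?(countE B2) ?(countE B) ?countB ?count_mem_uniq // ?(outE P) ?(outE M)
  ?(outE Q); try by move=> x; rewrite ?(perm_mem permB) // !mem_cat => ->; rewrite ?orbT.
exact: gain.
Qed.

Lemma ELAT_merge_runs :
  Num.min (ELAT d r p (P ++ B ++ M ++ Q)) (ELAT d r p (P ++ M ++ B ++ Q))
    <= ELAT d r p (P ++ B1 ++ M ++ B2 ++ Q).
Proof.
have [_ _ S12 _] := runs_uniq_disjoint.
have card_gt0 (s : seq V) : s != [::] -> (0 : R) < #|[set x in s]|%:R.
  by case: s => [//|x s] _; rewrite ltr0n; apply/card_gt0P; exists x; rewrite inE mem_head.
apply: (ge_min_of_weighted (card_gt0 _ B1_neq0) (card_gt0 _ B2_neq0)).
have S12r : S1 :|: S2 \subset [set~ r].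
  by apply/subsetP => x; rewrite !inE => /orP[/(allP B1S) | /(allP B2S)] /andP[].
set S0 := [set~ r] :\: (S1 :|: S2).
have splitV : [set~ r] = S0 :|: (S1 :|: S2).
  by rewrite setUC -{1}(setID [set~ r] (S1 :|: S2)) (setIidPr S12r).
have S0_12 : [disjoint S0 & S1 :|: S2] by rewrite /S0 disjoints_subset setDE subsetIr.
rewrite !ELAT_expect -!expectB -!expectZ -expectD splitV.
apply: expect_splitU_le0 => // A0 sA0.
have [D [da [db [da_ge0 db_ge0 gain]]]] := LAT_merge_gain_bound (disjointWl sA0 S0_12).
apply: le_trans (expect_block_bound_le0 D p_ge0 p_le1 S12 da_ge0 db_ge0).
exact: ler_expect.
Qed.

End MergeRuns.

Theorem lemma6 (R : realFieldType) (V X : finType) (d : V -> V -> R) (r : V)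
    (grp : V -> X) (p : R)
    (d_refl : forall x, d x x = 0)
    (d_sym : forall x y, d x y = d y x)
    (d_ge0 : forall x y, 0 <= d x y)
    (d_tri : forall x y w, d x w <= d x y + d y w)
    (coloc : forall u w, u != r -> w != r -> grp u = grp w ->
        d u w = 0 /\ (forall y, d u y = d w y))
    (p_ge0 : 0 <= p) (p_le1 : p <= 1)
    (tau : seq V) (Htau : master_tour r tau)
    (z : X) (Ci Cj : seq V)
    (HCi : maximal_run r grp z tau Ci) (HCj : maximal_run r grp z tau Cj)
    (Hij : Ci != Cj) :
  Num.min (ELAT d r p (move_after r tau Ci Cj))
          (ELAT d r p (move_before r tau Ci Cj))
    <= ELAT d r p tau.
Proof.
have [Utau _] := Htau.
have [_ [_ [_ nCi aCi _ _]]] := maximal_run_split HCi.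
have [_ [_ [_ nCj aCj _ _]]] := maximal_run_split HCj.
have merge := ELAT_merge_runs d_refl d_sym d_ge0 d_tri coloc p_ge0 p_le1.
have [P [M [Q [HT | HT]]]] := maximal_runs_ordered HCi HCj Hij; rewrite HT in Utau *.
- have [-> ->] := moves_of_ordered_runs r Utau nCi nCj.
  exact: merge Utau nCi nCj aCi aCj (perm_refl _).
- have [-> ->] := moves_of_reversed_runs r Utau nCi nCj.
  by rewrite minC; apply: merge Utau nCj nCi aCj aCi _; rewrite perm_catC.
Qed.
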